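(* Let $X$ be an infinite h-homogeneous zero-dimensional compact Hausdorff space, $G=\mathrm{Homeo}(X)$, $k\ge1$ and $T\in\{1,-1\}^{S_k}$. Define $\phi_T:\Phi(X)\to\Omega_k$ by $\phi_T(c)(\beta)=T(\theta_\beta(c))$. Then $\phi_T$ is continuous and $G$-equivariant.
   Context: h-homogeneous: every nonempty clopen subset of $X$ is homeomorphic to $X$. $\Phi(X)\subset\mathrm{Exp}(\mathrm{Exp}(X))$ is the compact space of maximal chains of nonempty closed subsets of $X$ (Vietoris topologies), with $gc=\{gF:F\in c\}$. $\mathcal D_k$ is the set of ordered partitions $(B_1,\dots,B_k)$ of $X$ into $k$ nonempty clopen sets, with $G$ acting piecewise and $S_k$ acting by $\sigma(B_1,\dots,B_k)=(B_{\sigma(1)},\dots,B_{\sigma(k)})$. $\Omega_k=\{1,-1\}^{\mathcal D_k}$ with the product topology and $G$-action $(g\omega)(\beta)=\omega(g^{-1}\beta)$. For $c\in\Phi(X)$ and nonempty closed $D$, $D_c=\bigcap\{A\in c:A\cap D\ne\emptyset\}$; for $\beta\in\mathcal D_k$, $t^*_c(\beta)$ lists the pieces of $\beta$ in increasing order with respect to $B_i<_cB_j\iff (B_i)_c\subseteq(B_j)_c$, and $\theta_\beta(c)\in S_k$ is the unique permutation with $\theta_\beta(c)\beta=t^*_c(\beta)$. *)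

From HB Require Import structures.
From mathcomp Require Import all_boot all_order all_algebra all_fingroup.
From mathcomp Require Import all_classical all_reals all_analysis.

Set Implicit Arguments.
Unset Strict Implicit.
Unset Printing Implicit Defensive.

Import Order.TTheory GRing.Theory Num.Theory.
Local Open Scope classical_set_scope.

(* [vietoris T] is the power set of T endowed with the Vietoris topology,
   generated by the subbase {A | A `<=` U} and {A | A `&` U !=set0},
   U ranging over the open sets of T.  Restricted (as a subspace) to the
   nonempty closed sets this is the usual hyperspace Exp(T). *)
Definition vietoris (T : Type) := set T.

HB.instance Definition _ (T : Type) := Choice.on (vietoris T).

Definition vietoris_index (T : topologicalType) := (set T * bool)%type.

Definition vietoris_dom (T : topologicalType) : set (vietoris_index T) :=
  [set Ub | open Ub.1].

Definition vietoris_subbase (T : topologicalType) (Ub : vietoris_index T)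
  : set (vietoris T) :=
  if Ub.2 then [set A : set T | A `<=` Ub.1]
  else [set A : set T | A `&` Ub.1 !=set0].

HB.instance Definition _ (T : topologicalType) :=
  @isSubBaseTopological.Build (vietoris T) (vietoris_index T)
    (@vietoris_dom T) (@vietoris_subbase T).

Definition ExpSet (X : topologicalType) : set (set X) :=
  [set F | closed F /\ F !=set0].

Arguments ExpSet X : clear implicits.

Definition Exp (X : topologicalType) : topologicalType :=
  subspace (ExpSet X : set (vietoris X)).

(* the ambient space of Exp(Exp(X)): subsets of Exp(X) with the Vietoris
   topology built from the topology of Exp(X) *)
Definition ExpExp (X : topologicalType) : topologicalType := vietoris (Exp X).

Arguments Exp X : clear implicits.
Arguments ExpExp X : clear implicits.

Definition is_chain (X : topologicalType) (c : set (set X)) :=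
  c `<=` ExpSet X /\
  (forall A B, c A -> c B -> A `<=` B \/ B `<=` A).

Definition maximal_chain (X : topologicalType) (c : set (set X)) :=
  is_chain c /\ (forall c', is_chain c' -> c `<=` c' -> c' = c).

Definition Phi (X : topologicalType) : set (ExpExp X) :=
  [set c | maximal_chain (c : set (set X))].

Arguments Phi X : clear implicits.

Definition act_chain (X : Type) (g : X -> X) (c : set (set X)) : set (set X) :=
  [set g @` F | F in c].

Definition ordered_partition (X : topologicalType) (k : nat)
  (B : 'I_k -> set X) :=
  [/\ (forall i, clopen (B i) /\ B i !=set0),
      (forall i j, i != j -> B i `&` B j = set0) &
      \bigcup_i B i = [set: X]].

Definition Dk (X : topologicalType) (k : nat) : Type :=
  set_type (@ordered_partition X k).

Arguments Dk X k : clear implicits.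

(* piecewise action of a map g on D_k:  g (B_1,...,B_k) = (g B_1,...,g B_k)
   (insubd returns the argument unchanged when the image is not in D_k,
   which never happens for homeomorphisms g) *)
Definition act_D (X : topologicalType) (k : nat) (g : X -> X) (b : Dk X k)
  : Dk X k := insubd b (fun i => g @` (val b i)).

Definition perm_act (X : Type) (k : nat) (s : 'S_k) (B : 'I_k -> set X)
  : 'I_k -> set X := fun i => B (s i).

(* Omega_k = {1,-1}^{D_k}, product topology; the two-point discrete space
   {1,-1} is represented by bool (true = 1, false = -1) *)
Definition Omega (X : topologicalType) (k : nat) : topologicalType :=
  {ptws Dk X k -> bool}.

Arguments Omega X k : clear implicits.

(* G-action on Omega_k: (g w)(beta) = w(g^{-1} beta), with ginv = g^{-1} *)
Definition act_Omega (X : topologicalType) (k : nat) (ginv : X -> X)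
  (w : Omega X k) : Omega X k := fun b => w (act_D ginv b).

Definition Dc (X : Type) (c : set (set X)) (D : set X) : set X :=
  \bigcap_(A in [set A | c A /\ A `&` D !=set0]) A.

(* s beta = t*_c(beta): the pieces (s beta)_1, ..., (s beta)_k are listed
   in increasing order for <_c *)
Definition increasing_for (X : Type) (k : nat) (c : set (set X))
  (B : 'I_k -> set X) (s : 'S_k) :=
  forall i j : 'I_k, (i < j)%N ->
    Dc c (perm_act s B i) `<=` Dc c (perm_act s B j).

Definition theta (X : topologicalType) (k : nat) (b : Dk X k)
  (c : set (set X)) : 'S_k :=
  odflt 1%g [pick s : 'S_k | `[< increasing_for c (val b) s >] ].

Definition phi (X : topologicalType) (k : nat) (T : 'S_k -> bool)
  (c : ExpExp X) : Omega X k :=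
  fun b => T (theta b c).

Definition zero_dim (X : topologicalType) :=
  forall (U : set X) (x : X), open U -> U x ->
    exists V : set X, [/\ clopen V, V x & V `<=` U].

Definition homeomorphic_to_space (X : topologicalType) (A : set X) :=
  exists f : X -> X, exists g : X -> X,
    [/\ continuous f, f @` [set: X] = A,
        {within A, continuous g} &
        (forall x, g (f x) = x) /\ (forall y, A y -> f (g y) = y)].

Definition h_homogeneous (X : topologicalType) :=
  forall A : set X, clopen A -> A !=set0 -> homeomorphic_to_space A.

Definition homeo_pair (X : topologicalType) (g ginv : X -> X) :=
  [/\ continuous g, continuous ginv, cancel g ginv & cancel ginv g].

From HB Require Import structures.
From mathcomp Require Import all_boot all_order all_algebra all_fingroup.
From mathcomp Require Import all_classical all_reals all_analysis.
Local Open Scope classical_set_scope.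
Set Implicit Arguments.
Unset Strict Implicit.

(** For disjoint nonempty clopen sets D and D' and a maximal chain c, the
    comparison of D_c and D'_c is witnessed by a single member of c: D_c is
    contained in D'_c exactly when some member of c meets D but misses D';
    here compactness gives D_c a point of D, and maximality of c produces a
    separating member in one direction or the other.  Such a separating
    member persists under small Vietoris perturbations of c, so every
    theta_beta is locally constant on Phi(X), and phi_T is continuous for
    the product topology.  Equivariance is the identity
    D_{gc} = g (g^-1 D)_c. *)

Definition nested (T : Type) (c : set (set T)) :=
  forall A B, c A -> c B -> A `<=` B \/ B `<=` A.

Definition separates (T : Type) (c : set (set T)) (D D' : set T) :=
  exists2 A, c A & A `&` D !=set0 /\ A `&` D' = set0.

Lemma chain_nested (X : topologicalType) (c : set (set X)) :
  is_chain c -> nested c.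
Proof. by case. Qed.

Lemma chain_closed (X : topologicalType) (c : set (set X)) A :
  is_chain c -> c A -> closed A.
Proof. by move=> [sE _] /sE []. Qed.

Lemma separates_Dc_sub (T : Type) (c : set (set T)) (D D' : set T) :
  nested c -> separates c D D' -> Dc c D `<=` Dc c D'.
Proof.
move=> ch [A cA [AD AD']] x Dcx A' [cA' [y [A'y D'y]]].
have [AA'|A'A] := ch A A' cA cA'; first by apply: AA'; apply: Dcx.
have : (A `&` D') y by split=> //; apply: A'A.
by rewrite AD'.
Qed.

Lemma separates_asym (T : Type) (c : set (set T)) (D D' : set T) :
  nested c -> separates c D D' -> ~ separates c D' D.
Proof.
move=> ch [A cA [[x [Ax Dx]] AD']] [A' cA' [[y [A'y D'y]] A'D]].
have [AA'|A'A] := ch A A' cA cA'.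
  have : (A' `&` D) x by split=> //; apply: AA'.
  by rewrite A'D.
have : (A `&` D') y by split=> //; apply: A'A.
by rewrite AD'.
Qed.

Lemma Dc_meets (X : topologicalType) (c : set (set X)) (D : set X) :
  compact [set: X] -> is_chain c -> closed D -> D !=set0 ->
  Dc c D `&` D !=set0.
Proof.
move=> cpt ch clD [d Dd].
have [[A0 [cA0 A0D]]|noA] := pselect (exists A, c A /\ A `&` D !=set0);
  last by exists d; split=> // A [cA AD]; exfalso; apply: noA; exists A.
pose F := filter_from [set A | c A /\ A `&` D !=set0] (fun A => A `&` D).
have FF : ProperFilter F.
  apply: filter_from_proper => [|A []//].
  apply: filter_from_filter; first by exists A0.
  move=> A B [cA AD] [cB BD].
  have [AB|BA] := chain_nested ch cA cB.
    by exists A => // x [Ax Dx]; split; split=> //; apply: AB.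
  by exists B => // x [Bx Dx]; split; split=> //; apply: BA.
have [p [_ clFp]] := cpt F FF filterT.
have inAD A : c A -> A `&` D !=set0 -> (A `&` D) p.
  move=> cA AD; apply: (closedI (chain_closed ch cA) clD).
  by move=> B /clFp; apply; exists A.
exists p; split; last by case: (inAD A0 cA0 A0D).
by move=> A [cA AD]; case: (inAD A cA AD).
Qed.

Lemma maximal_chain_mem (X : topologicalType) (c : set (set X)) (N : set X) :
  maximal_chain c -> closed N -> N !=set0 ->
  (forall A, c A -> A `<=` N \/ N `<=` A) -> c N.
Proof.
move=> [[sE ch] max] clN N0 cmp.
suff <- : c `|` [set N] = c by right.
apply: max => [|A cA]; last by left.
split=> [A [/sE //|->] //|A B [cA|->] [cB|->]]; first exact: ch.
- by have [] := cmp A cA; [left|right].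
- by have [] := cmp B cB; [right|left].
- by left.
Qed.

Lemma maximal_chain_separates (X : topologicalType) (c : set (set X))
    (D D' : set X) :
  compact [set: X] -> maximal_chain c -> closed D -> D !=set0 -> open D' ->
  D `&` D' = set0 -> separates c D D' \/ separates c D' D.
Proof.
move=> cpt mc clD D0 oD' DD'.
have ch := mc.1.
(* If nothing separates D' from D, then D_c minus D' is comparable with every
   member of c, hence belongs to c, and it separates D from D'. *)
have [|nsep] := pselect (separates c D' D); [by right | left].
have [y [Dcy Dy]] := Dc_meets cpt ch clD D0.
have D'y : ~ D' y by move=> D'y; have : (D `&` D') y by []; rewrite DD'.
pose N := Dc c D `&` ~` D'.
have clN : closed N.
  apply: closedI; last exact: open_closedC.
  by apply: closed_bigI => A [cA _]; exact: chain_closed ch cA.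
have cmpN A : c A -> A `<=` N \/ N `<=` A.
  move=> cA; have [AD|AD] := pselect (A `&` D !=set0).
    by right=> x [Dcx _]; exact: Dcx.
  left=> x Ax; split.
    move=> B [cB BD]; have [AB|BA] := chain_nested ch cA cB; first exact: AB.
    exfalso; apply: AD; case: BD => z [Bz Dz].
    by exists z; split=> //; exact: BA.
  move=> D'x; apply: nsep; exists A => //.
  by split; [exists x|exact/nonemptyPn].
have cN : c N by apply: maximal_chain_mem => //; exists y.
exists N => //; split; first by exists y.
by apply/seteqP; split=> [z [[_ nD'z] D'z]|//].
Qed.

Lemma Dc_sub_separates (X : topologicalType) (c : set (set X)) (D D' : set X) :
  compact [set: X] -> maximal_chain c -> closed D -> D !=set0 -> open D' ->
  D `&` D' = set0 -> Dc c D `<=` Dc c D' <-> separates c D D'.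
Proof.
move=> cpt mc clD D0 oD' DD'.
split=> [sub|]; last exact: separates_Dc_sub (chain_nested mc.1).
have [//|[A cA [AD' AD]]] := maximal_chain_separates cpt mc clD D0 oD' DD'.
have [y [Dcy Dy]] := Dc_meets cpt mc.1 clD D0.
have : (A `&` D) y by split=> //; exact: (sub _ Dcy A (conj cA AD')).
by rewrite AD.
Qed.

Lemma vietoris_subbase_open (T : topologicalType) (U : set T) (b : bool) :
  open U -> open (vietoris_subbase (U, b) : set (vietoris T)).
Proof.
move=> oU; exists [set vietoris_subbase (U, b)]; last by rewrite bigcup_set1.
by move=> _ ->; exact: finI_from1.
Qed.

Lemma separates_near (X : topologicalType) (c0 : ExpExp X) (D D' : set X) :
  open D -> closed D' -> separates c0 D D' ->
  \forall c \near c0, separates (c : set (set X)) D D'.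
Proof.
move=> oD clD' [A c0A [AD AD']].
pose W := [set A' : Exp X | A' `&` D !=set0 /\ A' `&` D' = set0].
have oW : open W.
  have -> : W = (vietoris_subbase (D, false) `&` vietoris_subbase (~` D', true)
                  : set (vietoris X)).
    apply/seteqP; split=> A' /= [A'D A'D']; split=> //.
      by move=> x A'x D'x; have : (A' `&` D') x by []; rewrite A'D'.
    by apply/nonemptyPn => -[x [/A'D']].
  apply: open_subspaceW; apply: openI; apply: vietoris_subbase_open => //.
  by rewrite openC.
have oV : open ([set c : ExpExp X | c `&` W !=set0]).
  exact: (vietoris_subbase_open false oW).
apply: filterS (open_nbhs_nbhs (conj oV _)); last by exists A.
by move=> c [A' [cA' ?]]; exists A'.
Qed.

Lemma Dc_sub_locally_constant (X : topologicalType) (c0 : ExpExp X)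
    (D D' : set X) :
  compact [set: X] -> Phi X c0 -> clopen D -> D !=set0 -> clopen D' ->
  D `&` D' = set0 ->
  \forall c \near within (Phi X) (nbhs c0),
    Dc c D `<=` Dc c D' <-> Dc c0 D `<=` Dc c0 D'.
Proof.
move=> cpt mc0 [oD clD] D0 [oD' clD'] DD'.
have sub_sep c : Phi X c -> Dc c D `<=` Dc c D' <-> separates c D D'.
  by move=> mc; exact: Dc_sub_separates.
have [sep0|sep0] := maximal_chain_separates cpt mc0 clD D0 oD' DD'.
  apply: filterS (separates_near oD clD' sep0) => c sep mc.
  by rewrite (propext (sub_sep c mc)) (propext (sub_sep c0 mc0)).
apply: filterS (separates_near oD' clD sep0) => c sep mc.
rewrite (propext (sub_sep c mc)) (propext (sub_sep c0 mc0)).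
have nested_at c' : Phi X c' -> nested c' by move=> [/chain_nested].
split=> sep'; exfalso.
- exact: separates_asym (nested_at c mc) sep' sep.
- exact: separates_asym (nested_at c0 mc0) sep' sep0.
Qed.

Lemma theta_eq (X : topologicalType) (k : nat) (b b' : Dk X k)
    (c c' : set (set X)) :
  (forall i j, Dc c (val b i) `<=` Dc c (val b j) <->
               Dc c' (val b' i) `<=` Dc c' (val b' j)) ->
  theta b c = theta b' c'.
Proof.
move=> E; rewrite /theta; congr odflt; apply: eq_pick => s /=.
suff -> : increasing_for c (val b) s = increasing_for c' (val b') s by [].
by apply: propext; split=> inc i j ij; apply/E; exact: inc.
Qed.

Lemma Dk_partition (X : topologicalType) (k : nat) (b : Dk X k) :
  ordered_partition (val b).
Proof. exact: set_valP. Qed.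

Lemma theta_locally_constant (X : topologicalType) (k : nat) (b : Dk X k)
    (c0 : ExpExp X) :
  compact [set: X] -> Phi X c0 ->
  \forall c \near within (Phi X) (nbhs c0), theta b c = theta b c0.
Proof.
move=> cpt mc0; have [Bco Bdisj _] := Dk_partition b.
have : \forall c \near within (Phi X) (nbhs c0), forall ij : 'I_k * 'I_k,
    Dc c (val b ij.1) `<=` Dc c (val b ij.2) <->
    Dc c0 (val b ij.1) `<=` Dc c0 (val b ij.2).
  apply: filter_forall => -[i j] /=.
  have [->|ij] := eqVneq i j; first by apply: nearW => c; split=> _.
  apply: Dc_sub_locally_constant => //; last exact: Bdisj.
  - by case: (Bco i).
  - by case: (Bco i).
  - by case: (Bco j).
by apply: filterS => c E; apply: theta_eq => i j; exact: (E (i, j)).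
Qed.

Lemma ptws_cvg_near_eq (U : Type) (V : topologicalType)
    (F : set_system {ptws U -> V}) (f : {ptws U -> V}) :
  Filter F -> (forall u, \forall g \near F, g u = f u) -> F --> f.
Proof.
move=> FF Fu; apply/cvg_sup => u A /= [_ [[C oC <-] Cf] CA].
by apply: filterS (Fu u) => g gu; apply: CA => /=; rewrite gu.
Qed.

Lemma phi_continuous (X : topologicalType) (k : nat) (T : 'S_k -> bool) :
  compact [set: X] -> {within Phi X, continuous (phi T)}.
Proof.
move=> cpt; apply/subspace_continuousP => c0 mc0.
apply: ptws_cvg_near_eq => b.
apply: filterS (theta_locally_constant b cpt mc0) => c /= E.
by rewrite /phi /from_subspace E.
Qed.

Lemma can2_image (T : Type) (g ginv : T -> T) (S : set T) :
  cancel g ginv -> cancel ginv g -> ginv @` S = g @^-1` S.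
Proof.
move=> gK ginvK; apply/seteqP; split=> x /=.
  by case=> y Sy <-; rewrite ginvK.
by move=> Sgx; exists (g x); rewrite ?gK.
Qed.

Lemma ordered_partition_preimage (X : topologicalType) (k : nat)
    (g : X -> X) (B : 'I_k -> set X) :
  continuous g -> set_surj [set: X] [set: X] g ->
  ordered_partition B -> ordered_partition (fun i => g @^-1` B i).
Proof.
move=> cg gsurj [Bco Bdisj Bcov]; split.
- move=> i; have [[oB clB] [x Bx]] := Bco i; split.
    by split; [exact: open_comp|exact: preimage_closed].
  by have [y _ gy] := gsurj x I; exists y; rewrite /= gy.
- by move=> i j ij; rewrite -preimage_setI (Bdisj _ _ ij) preimage_set0.
- by rewrite -preimage_bigcup Bcov preimage_setT.
Qed.

Lemma act_D_val (X : topologicalType) (k : nat) (g ginv : X -> X) (b : Dk X k) :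
  homeo_pair g ginv -> val (act_D ginv b) = (fun i => ginv @` val b i).
Proof.
move=> [cg _ gK ginvK]; rewrite /act_D insubdK // inE.
under eq_fun do rewrite (can2_image _ gK ginvK).
apply: ordered_partition_preimage (Dk_partition b) => // x _.
by exists (ginv x).
Qed.

Lemma Dc_act_chain (T : Type) (g ginv : T -> T) (c : set (set T)) (D : set T) :
  cancel g ginv -> cancel ginv g ->
  Dc (act_chain g c) D = ginv @^-1` Dc c (ginv @` D).
Proof.
move=> gK ginvK; apply/seteqP; split=> x /=.
- move=> Dcx A [cA [z [Az [d Dd dz]]]].
  have [|a Aa <-] := Dcx (g @` A); last by rewrite gK.
  split; first by exists A.
  by exists (g z); split; [exists z|rewrite -dz ginvK].
- move=> Dcx _ [[A cA <-] [_ [[a Aa <-] Dga]]].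
  exists (ginv x); last by rewrite ginvK.
  apply: Dcx; split=> //; exists a; split=> //.
  by exists (g a); rewrite ?gK.
Qed.

Lemma theta_act (X : topologicalType) (k : nat) (g ginv : X -> X)
    (b : Dk X k) (c : set (set X)) :
  homeo_pair g ginv -> theta (act_D ginv b) c = theta b (act_chain g c).
Proof.
move=> hg; have [_ _ gK ginvK] := hg.
apply: theta_eq => i j; rewrite (act_D_val b hg) !(Dc_act_chain _ _ gK ginvK).
split=> [sub x|sub y]; first exact: sub.
by have := sub (g y); rewrite /preimage /= gK.
Qed.

Lemma phi_act (X : topologicalType) (k : nat) (T : 'S_k -> bool)
    (g ginv : X -> X) (c : ExpExp X) :
  homeo_pair g ginv -> phi T (act_chain g c) = act_Omega ginv (phi T c).
Proof.
by move=> hg; apply: funext => b; rewrite /act_Omega /phi (theta_act _ _ hg).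
Qed.

Theorem lemma4p8 (X : topologicalType) (k : nat) (T : 'S_k -> bool) :
  infinite_set [set: X] -> h_homogeneous X -> zero_dim X ->
  compact [set: X] -> hausdorff_space X -> (1 <= k)%N ->
  {within Phi X, continuous (phi T)} /\
  (forall g ginv : X -> X, homeo_pair g ginv ->
     forall c : ExpExp X, Phi X c ->
       phi T (act_chain g c) = act_Omega ginv (phi T c)).
Proof.
move=> _ _ _ cpt _ _; split; first exact: phi_continuous.
by move=> g ginv hg c _; exact: phi_act.
Qed.
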